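(* Let $S=\{x_0x_2x_3=x_1^3\}\subset\mathbb P^3$ be the cubic surface with three $\boldsymbol A_2$ singularities, and consider the GIT quotient $\mathbb P(H^0(S,-K_S))^{ss}/\!\!/\mathrm{Aut}(S)$ for the natural linear action described in the context (the linearisation with $a=b=0$). Let $D\in|-K_S|\cong\mathbb P(H^0(S,-K_S))$. Then: (1) $D$ is stable if and only if $D\cap\mathrm{Sing}(S)=\emptyset$; (2) $D$ is polystable but not stable if and only if $D=H_*$, the union of the unique three lines in $S$ which contain the three $\boldsymbol A_2$ singularities; (3) $D$ is unstable if and only if $D$ is either a cuspidal plane cubic curve with $\mathrm{Sing}(D)\cap\mathrm{Sing}(S)\neq\emptyset$ or a triple line.
   Context: $H^0(S,-K_S)=H^0(S,\mathcal O_S(1))$ has basis $x_0,x_1,x_2,x_3$. $\mathrm{Aut}(S)\cong(\mathbb C^* )^2\rtimes\Sigma_3$, where $(t_0,t_2)\in(\mathbb C^* )^2$ acts by $(t_0,t_2)\cdot[x_0,x_1,x_2,x_3]=[t_0x_0,x_1,t_2x_2,t_0^{-1}t_2^{-1}x_3]$ and $\Sigma_3$ acts by permuting $x_0,x_2,x_3$. The linearisation ''$a=b=0$'' is this linear representation on $H^0(S,\mathcal O_S(1))$ with no twist by a character (a general twist would multiply by $t_0^{-a}t_2^{-b}$). $H_*=\{x_1=0\}|_S$. *)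

From mathcomp Require Import all_boot all_order all_algebra all_fingroup.
From mathcomp Require Import reals complex mpoly.
Set Implicit Arguments. Unset Strict Implicit. Unset Printing Implicit Defensive.
Import GRing.Theory.
Local Open Scope ring_scope.

(* Vectors of H^0(S, O_S(1)) = span(x_0,x_1,x_2,x_3) are coefficient
   vectors a : 'I_4 -> C, the section being  \sum_i a_i x_i.
   Points of P^3 (and of |-K_S| = P(H^0)) are nonzero vectors up to scaling;
   all predicates below are invariant under scaling. *)

Section Cubic.
Variable R : realType.
Local Notation C := (R[i]).
Local Notation vec := ('I_4 -> C).

Definition nonzero (v : vec) : Prop := exists i, v i != 0.

(* group elements: (t0, t2, sigma) with t0, t2 nonzero, sigma permuting
   the indices {0,2,3} (encoded as 'I_3 via idx3). *)
Definition grp := (C * C * 'S_3)%type.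
Definition in_grp (g : grp) : Prop := g.1.1 != 0 /\ g.1.2 != 0.

Definition idx3 (j : 'I_3) : 'I_4 := inord (nth 0%N [:: 0%N; 2%N; 3%N] j).
Definition idx3inv (i : 'I_4) : 'I_3 :=
  inord (if i == 0 :> nat then 0%N else if i == 2 :> nat then 1%N else 2%N).
Definition perm4 (s : 'S_3) (i : 'I_4) : 'I_4 :=
  if i == 1 :> nat then i else idx3 (s (idx3inv i)).

(* torus weights: (t0,t2).[x0,x1,x2,x3] = [t0 x0, x1, t2 x2, t0^-1 t2^-1 x3]
   (linearisation a = b = 0: no twist by a character) *)
Definition tweight (t0 t2 : C) (i : 'I_4) : C :=
  if i == 0 :> nat then t0 else if i == 2 :> nat then t2
  else if i == 3 :> nat then (t0 * t2)^-1 else 1.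

(* action on coefficient vectors of sections: first the torus, then sigma,
   where sigma sends x_i to x_(perm4 sigma i), so the coefficient of
   x_(perm4 sigma i) in sigma.s is the coefficient of x_i in s. *)
Definition act (g : grp) (a : vec) : vec :=
  fun i => let j := perm4 (g.2^-1)%g i in tweight g.1.1 g.1.2 j * a j.

Definition orbit (a : vec) (x : vec) : Prop :=
  exists g, in_grp g /\ forall i, x i = act g a i.

Definition zariski_closure (O : vec -> Prop) (w : vec) : Prop :=
  forall p : {mpoly C[4]}, (forall x, O x -> p.@[x] = 0) -> p.@[w] = 0.

(* GIT notions for the linear action on the affine cone (Mumford) *)
Definition semistable (a : vec) : Prop :=
  ~ zariski_closure (orbit a) (fun _ => 0).
Definition unstable (a : vec) : Prop := ~ semistable a.
Definition polystable (a : vec) : Prop :=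
  nonzero a /\ (forall w, zariski_closure (orbit a) w -> orbit a w).
Definition finite_stabilizer (a : vec) : Prop :=
  exists s : seq grp, forall g, in_grp g -> (forall i, act g a i = a i) -> g \in s.
Definition stable (a : vec) : Prop := polystable a /\ finite_stabilizer a.

Definition Fcub : {mpoly C[4]} := 'X_0 * 'X_2 * 'X_3 - 'X_1 ^+ 3.
Definition lin (a : vec) : {mpoly C[4]} := \sum_i a i *: 'X_i.

Definition SingS (p : vec) : Prop :=
  nonzero p /\ Fcub.@[p] = 0 /\ forall i, (mderiv i Fcub).@[p] = 0.

Definition meets_SingS (a : vec) : Prop :=
  exists p, SingS p /\ (lin a).@[p] = 0.

(* D = H_* : D is the point of |-K_S| = P(H^0) given by the section x_1 *)
Definition is_Hstar (a : vec) : Prop :=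
  exists c : C, c != 0 /\ forall i, a i = c * (i == 1 :> nat)%:R.

Definition onD (a : vec) (p : vec) : Prop :=
  nonzero p /\ Fcub.@[p] = 0 /\ (lin a).@[p] = 0.
(* Sing(D): Jacobian criterion for the complete intersection F = l_a = 0:
   grad F(p) and a are linearly dependent (a <> 0). *)
Definition SingD (a : vec) (p : vec) : Prop :=
  onD a p /\ exists c : C, forall i, (mderiv i Fcub).@[p] = c * a i.

Definition hessq (p v : vec) : C :=
  \sum_i \sum_j (mderiv j (mderiv i Fcub)).@[p] * v i * v j.

(* the plane cubic D is reducible: F|_H = L|_H * Q|_H with L a linear form
   not vanishing identically on H = {l_a = 0} *)
Definition D_reducible (a : vec) : Prop :=
  exists L Q M : {mpoly C[4]},
    [/\ L \is 1.-homog, Q \is 2.-homog, M \is 2.-homog,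
        (forall c : C, L != c *: lin a) & Fcub = L * Q + lin a * M].

(* p is a cusp of the plane curve D: a singular point of D whose tangent cone
   (the quadratic part of the equation of D at p, i.e. the Hessian form of F
   restricted to the plane l_a = 0) is a (nonzero) double line. *)
Definition cusp (a : vec) (p : vec) : Prop :=
  SingD a p /\
  (exists m : vec, forall v : vec, (lin a).@[v] = 0 ->
       hessq p v = (\sum_i m i * v i) ^+ 2) /\
  (exists v : vec, (lin a).@[v] = 0 /\ hessq p v != 0).

Definition cuspidal_cubic (a : vec) : Prop :=
  ~ D_reducible a /\ exists p, cusp a p.

(* triple line: D = 3L as a divisor on the plane H *)
Definition triple_line (a : vec) : Prop :=
  exists L M : {mpoly C[4]},
    [/\ L \is 1.-homog, M \is 2.-homog,
        (forall c : C, L != c *: lin a) & Fcub = L ^+ 3 + lin a * M].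

End Cubic.

From Pilot Require Import Defs.
From mathcomp Require Import all_boot all_order all_algebra all_fingroup.
From mathcomp Require Import reals complex mpoly.
From mathcomp Require Import ring.
From Stdlib Require Import Classical.
Import GRing.Theory Num.Theory.
Local Open Scope ring_scope.

Set Implicit Arguments.
Unset Strict Implicit.

(* The polynomials x1 and x0 x2 x3 are invariant under Aut(S), hence constant on
   orbit closures.  If a0 a2 a3 <> 0 the orbit of a is the whole level set of
   these two invariants, so it is closed, and the stabiliser is finite.  If one
   of a0, a2, a3 vanishes, the torus moves a to (t a0 : a1 : t a2 : t a3) for
   every t <> 0 (the weight t^-2 falls on the vanishing coordinate), so the
   orbit closure contains (0 : a1 : 0 : 0): a is unstable iff moreover a1 = 0,
   and polystable iff it already equals (0 : a1 : 0 : 0), i.e. D = H_*.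
   Sing S consists of the three coordinate vertices, so D meets Sing S iff
   a0 a2 a3 = 0.  Finally, the unstable planes (a1 = 0) through one vertex cut S
   in a cuspidal cubic with its cusp at that vertex, those through two vertices
   in a triple line; conversely a triple line, or a cusp with D through a
   vertex, forces a1 = 0, by comparing coefficients of F restricted to the
   plane. *)

Lemma ord4P (i : 'I_4) : [\/ i = 0, i = 1, i = 2 | i = 3].
Proof.
by case: i => [[|[|[|[|//]]]] lt_i4];
  [constructor 1|constructor 2|constructor 3|constructor 4]; apply/val_inj.
Qed.

Lemma sum4 (V : nmodType) (f : 'I_4 -> V) : \sum_i f i = f 0 + f 1 + f 2 + f 3.
Proof.
rewrite !big_ord_recr big_ord0 /= add0r.
by congr (_ + _ + _ + _); f_equal; apply/val_inj.
Qed.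

Lemma prod_neq1 (F : comPzSemiRingType) (f : 'I_4 -> F) :
  \prod_(i | i != 1) f i = f 0 * f 2 * f 3.
Proof.
rewrite big_mkcond !big_ord_recr big_ord0 /= mul1r mulr1.
by congr (_ * _ * _); f_equal; apply/val_inj.
Qed.

Inductive perm023 : 'I_4 -> 'I_4 -> 'I_4 -> Prop :=
  | Perm023 : perm023 0 2 3 | Perm032 : perm023 0 3 2 | Perm203 : perm023 2 0 3
  | Perm230 : perm023 2 3 0 | Perm302 : perm023 3 0 2 | Perm320 : perm023 3 2 0.

Lemma perm023_neq1 i j k : perm023 i j k -> i != 1.
Proof. by case. Qed.

Lemma perm023_sum (V : nmodType) i j k (f : 'I_4 -> V) : perm023 i j k ->
  \sum_l f l = f i + f 1 + f j + f k.
Proof.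
rewrite sum4; case; first by [].
- by rewrite [LHS](ACl (1*2*4*3)).
- by rewrite [LHS](ACl (3*2*1*4)).
- by rewrite [LHS](ACl (3*2*4*1)).
- by rewrite [LHS](ACl (4*2*1*3)).
- by rewrite [LHS](ACl (4*2*3*1)).
Qed.

Lemma perm023_prod (F : comPzSemiRingType) i j k (f : 'I_4 -> F) : perm023 i j k ->
  f 0 * f 2 * f 3 = f i * f j * f k.
Proof.
case; first by [].
- by rewrite [LHS](ACl (1*3*2)).
- by rewrite [LHS](ACl (2*1*3)).
- by rewrite [LHS](ACl (2*3*1)).
- by rewrite [LHS](ACl (3*1*2)).
- by rewrite [LHS](ACl (3*2*1)).
Qed.

Lemma natr_seq_uniq (F : numDomainType) (n : nat) :
  let s := [seq (k.+1)%:R : F | k <- iota 0 n] in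
  [/\ uniq s, size s = n & 0 \notin s].
Proof.
split; last 1 first.
- by apply/mapP => -[k _ /eqP]; rewrite eq_sym pnatr_eq0.
- by rewrite map_inj_uniq ?iota_uniq // => k l /eqP; rewrite eqr_nat eqSS => /eqP.
- by rewrite size_map size_iota.
Qed.

Lemma poly_eq0_nonzero_roots (F : numDomainType) (q : {poly F}) :
  (forall t, t != 0 -> q.[t] = 0) -> q = 0.
Proof.
move=> q0; have [s_uniq s_size s_nz] := natr_seq_uniq F (size q).
apply: roots_geq_poly_eq0 s_uniq _; last by rewrite s_size.
by apply/allP => t ts; apply/rootP/q0; apply: contraNneq s_nz => <-.
Qed.

Lemma exists_nonzero_notin (F : numDomainType) (s : seq F) :
  exists2 t, t != 0 & t \notin s.
Proof.
have [r_uniq r_size r_nz] := natr_seq_uniq F (size s).+1.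
have /allPn [t tr ts] : ~~ all (mem s) [seq (k.+1)%:R : F | k <- iota 0 (size s).+1].
  by apply/negP => /allP /(uniq_leq_size r_uniq); rewrite r_size ltnn.
by exists t => //; apply: contraNneq r_nz => <-.
Qed.

Lemma horner_mmap (F : comNzRingType) n (V : 'I_n -> {poly F}) (p : {mpoly F[n]}) t :
  (mmap polyC V p).[t] = p.@[fun i => (V i).[t]].
Proof.
rewrite mevalE horner_sum; apply: eq_bigr => m _.
rewrite hornerCM horner_prod; congr (_ * _); apply: eq_bigr => i _.
by rewrite horner_exp.
Qed.

Lemma square_offdiag_eq0 (F : idomainType) (x y z m0 m2 m3 : F) :
  (forall s0 s2 s3, x * s0 * s2 + y * s0 * s3 + z * s2 * s3
                    = (m0 * s0 + m2 * s2 + m3 * s3) ^+ 2) ->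
  [/\ x = 0, y = 0 & z = 0].
Proof.
move=> H; have sqr0 (r : F) : 0 = r ^+ 2 -> r = 0.
  by move/esym/eqP; rewrite sqrf_eq0 => /eqP.
have m0z : m0 = 0.
  by apply: sqr0; move: (H 1 0 0); rewrite !(mulr0, mul0r, mulr1, addr0).
have m2z : m2 = 0.
  by apply: sqr0; move: (H 0 1 0); rewrite !(mulr0, mul0r, mulr1, addr0, add0r).
have m3z : m3 = 0.
  by apply: sqr0; move: (H 0 0 1); rewrite !(mulr0, mul0r, mulr1, addr0, add0r).
move: (H 1 1 0) (H 1 0 1) (H 0 1 1); rewrite m0z m2z m3z.
by rewrite !(mulr0, mul0r, mulr1, addr0, add0r) expr0n.
Qed.

Lemma cube_mixed_coef_eq0 (F : numDomainType) (t a0 a2 a3 c0 c2 c3 : F) :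
  (forall u0 u2 u3, t * u0 * u2 * u3 + (a0 * u0 + a2 * u2 + a3 * u3) ^+ 3
                    = (c0 * u0 + c2 * u2 + c3 * u3) ^+ 3) -> t = 0.
Proof.
move=> H.
pose G u0 u2 u3 := t * u0 * u2 * u3 + (a0 * u0 + a2 * u2 + a3 * u3) ^+ 3
                   - (c0 * u0 + c2 * u2 + c3 * u3) ^+ 3.
have G0 u0 u2 u3 : G u0 u2 u3 = 0 by rewrite /G H subrr.
have natr_mul_eq0 n (r : F) : n%:R * r = 0 -> (0 < n)%N -> r = 0.
  by move=> /eqP; rewrite mulf_eq0 pnatr_eq0 => /orP[/eqP-> //|/eqP].
(* The coefficients of u0^3, u0^2 u2, u0^2 u3 and u0 u2 u3, by finite differences. *)
have e0 : a0 ^+ 3 - c0 ^+ 3 = G 1 0 0 by rewrite /G; ring.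
have e02 : 6 * (a0 ^+ 2 * a2 - c0 ^+ 2 * c2) = G 1 1 0 - G 1 (-1) 0 - 2 * G 0 1 0.
  by rewrite /G; ring.
have e03 : 6 * (a0 ^+ 2 * a3 - c0 ^+ 2 * c3) = G 1 0 1 - G 1 0 (-1) - 2 * G 0 0 1.
  by rewrite /G; ring.
have et : 4 * (t - 6 * (c0 * c2 * c3 - a0 * a2 * a3))
          = G 1 1 1 - G 1 1 (-1) - G 1 (-1) 1 + G 1 (-1) (-1).
  by rewrite /G; ring.
rewrite !G0 !(subr0, mulr0, addr0) in e0 e02 e03 et.
move/eqP: e0; rewrite subr_eq0 => /eqP e0.
move/natr_mul_eq0/(_ isT)/eqP: e02; rewrite subr_eq0 => /eqP e02.
move/natr_mul_eq0/(_ isT)/eqP: e03; rewrite subr_eq0 => /eqP e03.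
move/natr_mul_eq0/(_ isT)/eqP: et; rewrite subr_eq0 => /eqP ->.
suff -> : c0 * c2 * c3 = a0 * a2 * a3 by rewrite subrr mulr0.
(* Multiplied by c0^3 = a0^3, c0 c2 c3 becomes (c0^2 c2) (c0^2 c3) = (a0^2 a2) (a0^2 a3). *)
have : c0 ^+ 3 * (c0 * c2 * c3 - a0 * a2 * a3) = 0.
  transitivity ((c0 ^+ 2 * c2) * (c0 ^+ 2 * c3) - c0 ^+ 3 * (a0 * a2 * a3)).
    by ring.
  by rewrite -e02 -e03 -e0; ring.
move/eqP; rewrite mulf_eq0 expf_eq0 /= subr_eq0 => /orP[/eqP c0z|/eqP //].
move: e0; rewrite c0z expr0n /= => /eqP; rewrite expf_eq0 /= => /eqP ->.
by rewrite !mul0r.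
Qed.

Lemma idx3K : cancel idx3 idx3inv.
Proof. by case=> [[|[|[|//]]] lt3]; apply/val_inj; rewrite /idx3inv /idx3 /= !inordK. Qed.

Lemma idx3_neq1 (j : 'I_3) : (idx3 j == 1 :> nat) = false.
Proof. by case: j => [[|[|[|//]]] lt3]; rewrite /idx3 /= inordK. Qed.

Lemma idx3invK (i : 'I_4) : (i == 1 :> nat) = false -> idx3 (idx3inv i) = i.
Proof.
by case: i => [[|[|[|[|//]]]] lt4] //= _; apply/val_inj; rewrite /idx3inv /idx3 /= !inordK.
Qed.

Lemma perm4K (s : 'S_3) : cancel (perm4 s) (perm4 s^-1).
Proof.
move=> i; case i1: (i == 1 :> nat); first by rewrite /perm4 !i1.
by rewrite {2}/perm4 i1 /perm4 idx3_neq1 idx3K permK idx3invK.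
Qed.

Lemma perm4_eq1 (s : 'S_3) (i : 'I_4) : (perm4 s i == 1) = (i == 1).
Proof.
rewrite /perm4; case i1: (i == 1 :> nat);
  by rewrite -[_ == 1]/(_ == 1 :> nat) ?i1 ?idx3_neq1.
Qed.

Lemma perm4_1 (s : 'S_3) : perm4 s 1 = 1.
Proof. by []. Qed.

Lemma perm4_id : perm4 1 =1 id.
Proof. by move=> i; rewrite /perm4; case: ifP => // i1; rewrite perm1 idx3invK. Qed.

Section CubicSurface.
Variable R : realType.
Local Notation C := R[i].
Local Notation vec := ('I_4 -> C).
Implicit Types (a p q w x : vec) (g : grp R).

Lemma tweight_neq0 (t0 t2 : C) i : t0 != 0 -> t2 != 0 -> tweight t0 t2 i != 0.
Proof.
move=> t0_nz t2_nz; case: (ord4P i) => ->; rewrite /tweight //= ?oner_neq0 //.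
by rewrite invr_eq0 mulf_neq0.
Qed.

Lemma orbit_coord1 a x : Defs.orbit a x -> x 1 = a 1.
Proof. by case=> g [_ ->]; rewrite /Defs.act perm4_1 mul1r. Qed.

Lemma orbit_prod023 a x : Defs.orbit a x -> x 0 * x 2 * x 3 = a 0 * a 2 * a 3.
Proof.
case=> [[[t0 t2] s]] [[/= t0_nz t2_nz] xE]; rewrite -!prod_neq1.
under eq_bigr do rewrite xE /Defs.act /=.
rewrite (reindex_inj (can_inj (perm4K s))) /=.
rewrite (eq_bigl (fun i => i != 1)) => [|i]; last by rewrite perm4_eq1.
under eq_bigr do rewrite perm4K.
by rewrite big_split /= prod_neq1 /tweight /= mulfV ?mul1r // mulf_neq0.
Qed.

Lemma orbit_torus a x (t0 t2 : C) : t0 != 0 -> t2 != 0 ->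
  (forall i, x i = tweight t0 t2 i * a i) -> Defs.orbit a x.
Proof.
move=> t0_nz t2_nz xE; exists (t0, t2, 1%g); split=> // i.
by rewrite xE /Defs.act /= invg1 perm4_id.
Qed.

Lemma orbit_scale023 a x (t : C) : t != 0 -> a 0 * a 2 * a 3 = 0 ->
  (forall i, x i = if i == 1 then a 1 else t * a i) -> Defs.orbit a x.
Proof.
move=> t_nz /eqP; rewrite !mulf_eq0 -orbA => a023 xE.
have tt_nz : (t * t)^-1 != 0 by rewrite invr_eq0 mulf_neq0.
case/or3P: a023 => /eqP ai0.
- apply: (orbit_torus tt_nz t_nz) => i; rewrite xE.
  by case: (ord4P i) => -> /=; rewrite /tweight /= ?mul1r ?ai0 ?mulr0 //; congr (_ * _); field.
- apply: (orbit_torus t_nz tt_nz) => i; rewrite xE.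
  by case: (ord4P i) => -> /=; rewrite /tweight /= ?mul1r ?ai0 ?mulr0 //; congr (_ * _); field.
- apply: (orbit_torus t_nz t_nz) => i; rewrite xE.
  by case: (ord4P i) => -> /=; rewrite /tweight /= ?mul1r ?ai0 ?mulr0.
Qed.

Definition on_x1_axis a : Prop := [/\ a 0 = 0, a 2 = 0 & a 3 = 0].

Lemma on_x1_axisP a : on_x1_axis a -> forall i, i != 1 -> a i = 0.
Proof. by case=> a0 a2 a3 i; case: (ord4P i) => ->. Qed.

Lemma on_x1_axis_prod a : on_x1_axis a -> a 0 * a 2 * a 3 = 0.
Proof. by case=> -> _ _; rewrite !mul0r. Qed.

Lemma act_on_x1_axis g a : on_x1_axis a -> Defs.act g a =1 a.
Proof.
move=> /on_x1_axisP a_off1 i; rewrite /Defs.act.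
have [->|i_neq1] := eqVneq i 1; first by rewrite perm4_1 mul1r.
by rewrite !a_off1 ?perm4_eq1 ?mulr0.
Qed.

Lemma orbit_on_x1_axis a x : Defs.orbit a x -> on_x1_axis x -> on_x1_axis a.
Proof.
case=> [[[t0 t2] s]] [[/= t0_nz t2_nz] xE] /on_x1_axisP x_off1.
suff a_off1 j : j != 1 -> a j = 0 by split; apply: a_off1.
move=> j_neq1; have := x_off1 (perm4 s j).
rewrite perm4_eq1 xE /Defs.act /= perm4K => /(_ j_neq1) /eqP.
by rewrite mulf_eq0 (negbTE (tweight_neq0 _ t0_nz t2_nz)) => /eqP.
Qed.

Lemma zariski_closure_const (O : vec -> Prop) (p : {mpoly C[4]}) c w :
  (forall x, O x -> p.@[x] = c) -> zariski_closure O w -> p.@[w] = c.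
Proof.
move=> pO Ow; apply/eqP; rewrite -subr_eq0; apply/eqP.
have := Ow (p - c%:MP); rewrite mevalB mevalC; apply=> x /pO px.
by rewrite mevalB mevalC px subrr.
Qed.

Lemma zariski_closure_coord1 a w : zariski_closure (Defs.orbit a) w -> w 1 = a 1.
Proof.
by rewrite -(mevalXU w); apply: zariski_closure_const => x /orbit_coord1; rewrite mevalXU.
Qed.

Lemma zariski_closure_prod023 a w :
  zariski_closure (Defs.orbit a) w -> w 0 * w 2 * w 3 = a 0 * a 2 * a 3.
Proof.
have pE x : ('X_0 * 'X_2 * 'X_3 : {mpoly C[4]}).@[x] = x 0 * x 2 * x 3.
  by rewrite !mevalM !mevalXU.
by rewrite -pE; apply: zariski_closure_const => x /orbit_prod023; rewrite pE.
Qed.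

Lemma zariski_closure_curve (O : vec -> Prop) (V : 'I_4 -> {poly C}) w :
  (forall t, t != 0 -> O (fun i => (V i).[t])) -> (forall i, w i = (V i).[0]) ->
  zariski_closure O w.
Proof.
move=> OV wE p pO.
have -> : p.@[w] = (mmap polyC V p).[0] by rewrite horner_mmap; apply: meval_eq.
suff -> : mmap polyC V p = 0 by rewrite horner0.
by apply: poly_eq0_nonzero_roots => t t_nz; rewrite horner_mmap; apply/pO/OV.
Qed.

Lemma zariski_closure_orbit_axis a w : a 0 * a 2 * a 3 = 0 ->
  w 1 = a 1 -> on_x1_axis w -> zariski_closure (Defs.orbit a) w.
Proof.
move=> a023 w1 /on_x1_axisP w_off1.
pose V i : {poly C} := if i == 1 then (a 1)%:P else a i *: 'X.
apply: (@zariski_closure_curve _ V) => [t t_nz|i]; rewrite /V.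
  apply: orbit_scale023 t_nz a023 _ => i /=.
  by case: (i == 1); rewrite ?hornerC // hornerZ hornerX mulrC.
have [->|i_neq1] := eqVneq i 1; first by rewrite hornerC.
by rewrite w_off1 // hornerZ hornerX mulr0.
Qed.

Lemma zariski_closure_orbit_closed a w : a 0 * a 2 * a 3 != 0 ->
  zariski_closure (Defs.orbit a) w -> Defs.orbit a w.
Proof.
move=> a023 Ow; have w1 := zariski_closure_coord1 Ow.
have w023 := zariski_closure_prod023 Ow.
have /and3P[a0 a2 a3] : [&& a 0 != 0, a 2 != 0 & a 3 != 0].
  by move: a023; rewrite !mulf_eq0 !negb_or andbA.
have /and3P[w0 w2 w3] : [&& w 0 != 0, w 2 != 0 & w 3 != 0].
  by move: a023; rewrite -w023 !mulf_eq0 !negb_or andbA.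
apply: (@orbit_torus _ _ (w 0 / a 0) (w 2 / a 2)); rewrite ?mulf_neq0 ?invr_eq0 //.
move=> i; case: (ord4P i) => -> /=; rewrite /tweight /= ?w1 ?mul1r; try by field.
have -> : w 3 = a 0 * a 2 * a 3 / (w 0 * w 2) by rewrite -w023; field; rewrite w0 w2.
by field; rewrite a0 a2 w0 w2.
Qed.

Lemma finite_stabilizer_of a : a 0 != 0 -> a 2 != 0 -> finite_stabilizer a.
Proof.
move=> a0 a2; pose t s := (a (perm4 s 0) / a 0, a (perm4 s 2) / a 2, s).
exists [seq t s | s <- enum 'S_3] => -[[t0 t2] s] _ fixa.
have e0 := fixa (perm4 s 0); rewrite /Defs.act /= perm4K in e0.
have e2 := fixa (perm4 s 2); rewrite /Defs.act /= perm4K in e2.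
suff -> : (t0, t2, s) = t s by rewrite map_f ?mem_enum.
by rewrite /t -e0 -e2 /tweight /= !mulfK.
Qed.

Lemma not_finite_stabilizer a : on_x1_axis a -> ~ finite_stabilizer a.
Proof.
move=> a_axis [s sP].
have [t t_nz ts] := exists_nonzero_notin [seq g.1.1 | g <- s].
have := sP (t, 1, 1%g) (conj t_nz (oner_neq0 _)) (act_on_x1_axis _ a_axis).
by move/(map_f (fun g : grp R => g.1.1)); rewrite (negbTE ts).
Qed.

Lemma polystableE a : nonzero a ->
  polystable a <-> a 0 * a 2 * a 3 != 0 \/ on_x1_axis a.
Proof.
move=> a_nz; split=> [[_ closed]|a_cases]; last split=> // w Ow.
  have [a023|a023] := eqVneq (a 0 * a 2 * a 3) 0; [right|by left].
  pose w : vec := fun i => if i == 1 then a 1 else 0.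
  have w_axis : on_x1_axis w by [].
  exact/(orbit_on_x1_axis _ w_axis)/closed/zariski_closure_orbit_axis.
case: a_cases => [a023|a_axis]; first exact: zariski_closure_orbit_closed.
exists (1, 1, 1%g); split; first by split; apply: oner_neq0.
move=> i; rewrite act_on_x1_axis // -(mevalXU w).
by apply: zariski_closure_const Ow => x [g [_ xE]]; rewrite mevalXU xE act_on_x1_axis.
Qed.

Lemma stableE a : nonzero a -> stable a <-> a 0 * a 2 * a 3 != 0.
Proof.
move=> a_nz; rewrite /stable polystableE //; split=> [[[//|a_axis] a_fin]|a023].
  by case: (not_finite_stabilizer a_axis a_fin).
split; first by left.
move: a023; rewrite !mulf_eq0 !negb_or => /andP[/andP[a0 a2] _].
exact: finite_stabilizer_of.
Qed.

Lemma unstableE a : unstable a <-> a 1 = 0 /\ a 0 * a 2 * a 3 = 0.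
Proof.
split=> [/NNPP a0|[a1 a023]].
  split; first exact/esym/(zariski_closure_coord1 a0).
  by rewrite -(zariski_closure_prod023 a0) /= !mul0r.
by apply; apply: zariski_closure_orbit_axis.
Qed.

Lemma Fcub_eval x : (Fcub R).@[x] = x 0 * x 2 * x 3 - x 1 ^+ 3.
Proof. by rewrite /Fcub mevalB !mevalM !mevalXU. Qed.

Lemma lin_eval a x : (lin a).@[x] = a 0 * x 0 + a 1 * x 1 + a 2 * x 2 + a 3 * x 3.
Proof. by rewrite /lin raddf_sum /= sum4 !mevalZ !mevalXU. Qed.

Lemma mderivXU (i j : 'I_4) : mderiv i ('X_j : {mpoly C[4]}) = (i == j)%:R%:MP.
Proof.
rewrite mderivX mnm1E eq_sym; have [<-|ij] := eqVneq i j; last by rewrite scale0r.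
have -> : (U_(i) - U_(i))%MM = 0%MM by apply/mnmP => k; rewrite mnmBE subnn mnm0E.
by rewrite scale1r mpolyX0.
Qed.

Lemma gradF_eval x :
  [/\ (mderiv 0 (Fcub R)).@[x] = x 2 * x 3, (mderiv 1 (Fcub R)).@[x] = - 3 * x 1 ^+ 2,
      (mderiv 2 (Fcub R)).@[x] = x 0 * x 3 & (mderiv 3 (Fcub R)).@[x] = x 0 * x 2].
Proof.
by split; rewrite /Fcub !(mderivB, mderivM, mderivXU) /=
  !(mevalB, mevalD, mevalM, mevalC, mevalXU); ring.
Qed.

Lemma mderiv2F_eval (i j : 'I_4) x : (mderiv j (mderiv i (Fcub R))).@[x] =
  (i == 0)%:R * ((j == 2)%:R * x 3 + (j == 3)%:R * x 2)
  + (i == 2)%:R * ((j == 0)%:R * x 3 + (j == 3)%:R * x 0)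
  + (i == 3)%:R * ((j == 0)%:R * x 2 + (j == 2)%:R * x 0)
  - 6 * (i == 1)%:R * (j == 1)%:R * x 1.
Proof.
rewrite /Fcub !(mderivB, mderivD, mderivM, mderivC, mderivXU).
by rewrite !(mevalB, mevalD, mevalM, mevalC, mevalXU, meval0); ring.
Qed.

Lemma hessq_eval p v : hessq p v =
  2 * (p 3 * v 0 * v 2 + p 2 * v 0 * v 3 + p 0 * v 2 * v 3) - 6 * p 1 * v 1 ^+ 2.
Proof.
rewrite /hessq; under eq_bigr => i _ do under eq_bigr => j _ do rewrite mderiv2F_eval.
by rewrite !sum4 /=; ring.
Qed.

Lemma homog1_lin (L : {mpoly C[4]}) : L \is 1.-homog -> L = lin (fun i => L@_U_(i)).
Proof.
move=> L_homog; apply/mpolyP => m; rewrite /lin raddf_sum /=.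
have [[k /eqP->]|m_not1] := altP (mdeg1P m).
  rewrite (bigD1 k) //= mcoeffZ mcoeffXU eqxx mulr1 big1 ?addr0 // => j jk.
  by rewrite mcoeffZ mcoeffXU (negbTE jk) mulr0.
rewrite (dhomog_nemf_coeff L_homog) ?big1 // => j _.
rewrite mcoeffZ mcoeffX; case: eqP => [mj|]; last by rewrite mulr0.
by case/mdeg1P: m_not1; exists j; rewrite mj.
Qed.

Lemma SingSE p : SingS p <->
  nonzero p /\ [/\ p 1 = 0, p 2 * p 3 = 0, p 0 * p 3 = 0 & p 0 * p 2 = 0].
Proof.
have [d0 d1 d2 d3] := gradF_eval p.
split=> [[p_nz [_ dF]] | [p_nz [p1 p23 p03 p02]]]; split=> //.
  split; [|by rewrite -d0 dF|by rewrite -d2 dF|by rewrite -d3 dF].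
  have /eqP := dF 1; rewrite d1 mulf_eq0 oppr_eq0 pnatr_eq0 expf_eq0 /=.
  by move/eqP.
split; first by rewrite Fcub_eval p02 p1 mul0r expr0n subrr.
by move=> i; case: (ord4P i) => ->; rewrite ?d0 ?d1 ?d2 ?d3 ?p1 ?expr0n ?mulr0.
Qed.

Lemma SingS_support p : SingS p ->
  exists k, [/\ k != 1, p k != 0 & forall j, j != k -> p j = 0].
Proof.
case/SingSE => -[k pk] [p1 /eqP p23 /eqP p03 /eqP p02].
have k_neq1 : k != 1 by apply: contraNneq pk => ->; rewrite p1.
exists k; split=> // j jk; have [->//|j_neq1] := eqVneq j 1.
apply/eqP; move: p23 p03 p02; rewrite !mulf_eq0.
by case: (ord4P k) pk k_neq1 jk => -> pk // _; case: (ord4P j) j_neq1 => -> //= _ _;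
  rewrite (negbTE pk) ?orbF //= => *.
Qed.

Lemma lin_eval_supp a p k : (forall j, j != k -> p j = 0) -> (lin a).@[p] = a k * p k.
Proof.
move=> p_supp; rewrite /lin raddf_sum (bigD1 k) //= big1 ?addr0 => [|j jk].
  by rewrite mevalZ mevalXU.
by rewrite mevalZ mevalXU p_supp ?mulr0.
Qed.

Definition vertex (k : 'I_4) : vec := fun j => (j == k)%:R.

Lemma lin_eval_vertex a k : (lin a).@[vertex k] = a k.
Proof.
rewrite (@lin_eval_supp _ _ k) => [|j jk]; first by rewrite /vertex eqxx mulr1.
by rewrite /vertex (negbTE jk).
Qed.

Lemma SingS_vertex k : k != 1 -> SingS (vertex k).
Proof.
move=> k_neq1; apply/SingSE; split; first by exists k; rewrite /vertex eqxx oner_neq0.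
by case: (ord4P k) k_neq1 => -> //= _; rewrite /vertex /= ?mulr0 ?mul0r.
Qed.

Lemma meets_SingSE a : meets_SingS a <-> a 0 * a 2 * a 3 = 0.
Proof.
split=> [[p [/SingS_support [k [k_neq1 pk p_supp]] lp]] | a023].
  move: lp; rewrite (lin_eval_supp _ p_supp) => /eqP.
  rewrite mulf_eq0 (negbTE pk) orbF => /eqP ak.
  by case: (ord4P k) k_neq1 ak => -> // _ ->; rewrite ?mulr0 ?mul0r.
have [k [k_neq1 ak]] : exists k, k != 1 /\ a k = 0.
  move/eqP: a023; rewrite !mulf_eq0 -orbA.
  by case/or3P => /eqP ak; [exists 0|exists 2|exists 3].
by exists (vertex k); rewrite lin_eval_vertex; split; first exact: SingS_vertex.
Qed.

Section Permuted.
Variables i j k : 'I_4.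
Hypothesis ijk : perm023 i j k.

Lemma Fcub_perm : Fcub R = 'X_i * 'X_j * 'X_k - 'X_1 ^+ 3.
Proof. by rewrite /Fcub (perm023_prod (fun l => 'X_l) ijk). Qed.

Lemma Fcub_eval_perm x : (Fcub R).@[x] = x i * x j * x k - x 1 ^+ 3.
Proof. by rewrite Fcub_eval (perm023_prod x ijk). Qed.

Lemma lin_perm a : lin a = a i *: 'X_i + a 1 *: 'X_1 + a j *: 'X_j + a k *: 'X_k.
Proof. exact: (perm023_sum (fun l => a l *: 'X_l) ijk). Qed.

Lemma lin_eval_perm a x : (lin a).@[x] = a i * x i + a 1 * x 1 + a j * x j + a k * x k.
Proof. by rewrite lin_perm !mevalD !mevalZ !mevalXU. Qed.

Lemma hessq_perm p v : hessq p v =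
  2 * (p i * v j * v k + p j * v i * v k + p k * v i * v j) - 6 * p 1 * v 1 ^+ 2.
Proof. by rewrite hessq_eval; case: ijk; ring. Qed.

Definition pt4 (ci c1 cj ck : C) : vec :=
  fun l => if l == i then ci else if l == 1 then c1 else if l == j then cj else ck.

Lemma pt4E ci c1 cj ck : [/\ pt4 ci c1 cj ck i = ci, pt4 ci c1 cj ck 1 = c1,
  pt4 ci c1 cj ck j = cj & pt4 ci c1 cj ck k = ck].
Proof. by rewrite /pt4; case: ijk. Qed.

Lemma vertexE : [/\ vertex i i = 1, vertex i 1 = 0, vertex i j = 0 & vertex i k = 0].
Proof. by rewrite /vertex; case: ijk. Qed.

End Permuted.

Lemma D_reducible_lines a : D_reducible a ->
  exists b, forall x, (lin a).@[x] = 0 -> (lin b).@[x] = 0 -> (Fcub R).@[x] = 0.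
Proof.
case=> L [Q [M [/homog1_lin LE _ _ _ FE]]].
exists (fun i => L@_U_(i)); rewrite -LE => x ax Lx.
by rewrite FE mevalD !mevalM ax Lx !mul0r addr0.
Qed.

Lemma triple_line_cube a : triple_line a ->
  exists b, forall x, (lin a).@[x] = 0 -> (Fcub R).@[x] = (lin b).@[x] ^+ 3.
Proof.
case=> L [M [/homog1_lin LE _ _ FE]].
exists (fun i => L@_U_(i)); rewrite -LE => x ax.
by rewrite FE mevalD rmorphXn mevalM ax mul0r addr0.
Qed.

Lemma SingD_vertex a i : i != 1 -> a i = 0 -> SingD a (vertex i).
Proof.
move=> i_neq1 ai; have [p_nz [F0 dF0]] := SingS_vertex i_neq1.
split; last by exists 0 => l; rewrite dF0 mul0r.
by split=> //; split=> //; rewrite lin_eval_vertex.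
Qed.

Section Vertex.
Variables (i j k : 'I_4) (a : vec).
Hypotheses (ijk : perm023 i j k) (ai : a i = 0) (a1 : a 1 = 0) (ak : a k != 0).

(* A reducible D would contain the line {l_a = l_b = 0} of its plane; we exhibit
   a point of any such line lying off S. *)
Lemma not_D_reducible : a j != 0 -> ~ D_reducible a.
Proof.
move=> aj /D_reducible_lines [b Fb].
suff [x [ax bx]] : exists x, [/\ (lin a).@[x] = 0, (lin b).@[x] = 0 & (Fcub R).@[x] != 0].
  by rewrite (Fb x ax bx) eqxx.
have [bi|bi_nz] := eqVneq (b i) 0; last first.
  exists (pt4 i j (- b 1) (b i) 0 0).
  rewrite !(lin_eval_perm ijk) (Fcub_eval_perm ijk) ai a1.
  have [-> -> -> ->] := pt4E ijk (- b 1) (b i) 0 0.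
  by split; [ring|ring|rewrite !mulr0 sub0r oppr_eq0 expf_eq0].
have [b1|b1_nz] := eqVneq (b 1) 0.
  exists (pt4 i j 0 1 0 0).
  rewrite !(lin_eval_perm ijk) (Fcub_eval_perm ijk) ai a1 bi b1.
  have [-> -> -> ->] := pt4E ijk 0 1 0 0.
  by split; [ring|ring|rewrite !mulr0 expr1n sub0r oppr_eq0 oner_neq0].
pose y := - (b j * a k - b k * a j) / b 1.
pose z := - (1 + y ^+ 3) / (a j * a k).
exists (pt4 i j z y (a k) (- a j)).
rewrite !(lin_eval_perm ijk) (Fcub_eval_perm ijk) ai a1 bi.
have [-> -> -> ->] := pt4E ijk z y (a k) (- a j).
split; [ring|by rewrite /y; field|].
suff -> : z * a k * - a j - y ^+ 3 = 1 by apply: oner_neq0.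
by rewrite /z; field; rewrite aj ak.
Qed.

Lemma cusp_vertex : a j != 0 -> cusp a (vertex i).
Proof.
move=> aj; split; first exact: SingD_vertex (perm023_neq1 ijk) ai.
have [vi v1 vj vk] := vertexE ijk.
split.
  pose s := sqrtc (-2 * a j / a k); have s2 : s ^+ 2 = -2 * a j / a k := sqr_sqrtc _.
  exists (pt4 i j 0 0 s 0) => v.
  rewrite (lin_eval_perm ijk) (hessq_perm ijk) (perm023_sum _ ijk) vi v1 vj vk ai a1.
  have [-> -> -> ->] := pt4E ijk 0 0 s 0; rewrite !mul0r !add0r => av.
  have vk_eq : v k = - (a j * v j) / a k.
    apply: (mulfI ak); transitivity (- (a j * v j)); last by field.
    by apply/eqP; rewrite -addr_eq0 addrC av.
  by rewrite vk_eq; transitivity (s ^+ 2 * v j ^+ 2); [rewrite s2; field | ring].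
exists (pt4 i j 0 0 (a k) (- a j)).
rewrite (lin_eval_perm ijk) (hessq_perm ijk) vi v1 vj vk ai a1.
have [-> -> -> ->] := pt4E ijk 0 0 (a k) (- a j).
split; first by ring.
suff -> : 2 * (1 * a k * - a j + 0 * 0 * - a j + 0 * 0 * a k) - 6 * 0 * 0 ^+ 2
   = - (2 * (a k * a j)) :> C by rewrite oppr_eq0 !mulf_neq0 ?pnatr_eq0.
by ring.
Qed.

Lemma cuspidal_vertex : a j != 0 ->
  cuspidal_cubic a /\ exists p, SingD a p /\ SingS p.
Proof.
move=> aj; have i_neq1 := perm023_neq1 ijk.
split; first by split; [exact: not_D_reducible | exists (vertex i); exact: cusp_vertex].
by exists (vertex i); split; [exact: SingD_vertex | exact: SingS_vertex].
Qed.

(* The plane is x_k = 0, on which F = - x_1^3. *)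
Lemma triple_line_vertex : a j = 0 -> triple_line a.
Proof.
move=> aj; exists (- 'X_1), ((a k)^-1 *: ('X_i * 'X_j)).
have X_homog (l : 'I_4) : ('X_l : {mpoly C[4]}) \is 1.-homog.
  by rewrite dhomogX; apply/eqP; apply: mdeg1.
split; first by rewrite rpredN X_homog.
- by apply: dhomogZ; exact: (dhomogM (X_homog i) (X_homog j)).
- move=> c; apply/eqP => /(congr1 (meval (vertex 1))).
  rewrite mevalN mevalXU mevalZ lin_eval_vertex a1 /vertex eqxx mulr0 => /eqP.
  by rewrite oppr_eq0 pnatr_eq0.
rewrite (Fcub_perm ijk) (lin_perm ijk) ai a1 aj !scale0r !add0r.
by rewrite -scalerAl -scalerAr scalerA mulfV // scale1r; ring.
Qed.

End Vertex.

(* For a1 <> 0, (u0, u2, u3) |-> plane_pt a u0 u2 u3 parametrises the plane l_a = 0. *)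
Definition plane_pt a (u0 u2 u3 : C) : vec :=
  pt4 0 2 (a 1 * u0) (- (a 0 * u0 + a 2 * u2 + a 3 * u3)) (a 1 * u2) (a 1 * u3).

Lemma lin_plane_pt a u0 u2 u3 : (lin a).@[plane_pt a u0 u2 u3] = 0.
Proof. by rewrite lin_eval /plane_pt /pt4 /=; ring. Qed.

Lemma triple_line_coord1 a : triple_line a -> a 1 = 0.
Proof.
case/triple_line_cube => b Fb; suff /eqP : a 1 ^+ 3 = 0 by rewrite expf_eq0 => /eqP.
apply: (@cube_mixed_coef_eq0 _ _ (a 0) (a 2) (a 3)
  (a 1 * b 0 - a 0 * b 1) (a 1 * b 2 - a 2 * b 1) (a 1 * b 3 - a 3 * b 1)) => u0 u2 u3.
have := Fb _ (lin_plane_pt a u0 u2 u3).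
rewrite Fcub_eval lin_eval /plane_pt /pt4 /= => E.
by apply: etrans (etrans E _); ring.
Qed.

Lemma triple_line_prod023 a : triple_line a -> a 1 = 0 -> a 0 * a 2 * a 3 = 0.
Proof.
move=> /triple_line_cube [b Fb] a1; pose pt (u0 u2 u3 : C) := pt4 0 2 u0 0 u2 u3.
have F_pt u0 u2 u3 : (Fcub R).@[pt u0 u2 u3] = u0 * u2 * u3.
  by rewrite Fcub_eval /pt /pt4 /=; ring.
have lin_pt c u0 u2 u3 : (lin c).@[pt u0 u2 u3] = c 0 * u0 + c 2 * u2 + c 3 * u3.
  by rewrite lin_eval /pt /pt4 /=; ring.
have Fb_pt u0 u2 u3 : a 0 * u0 + a 2 * u2 + a 3 * u3 = 0 ->
    u0 * u2 * u3 = (b 0 * u0 + b 2 * u2 + b 3 * u3) ^+ 3.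
  by move=> au; rewrite -F_pt -lin_pt Fb // lin_pt.
have cube0 (r : C) : 0 = r ^+ 3 -> r = 0 by move/esym/eqP; rewrite expf_eq0 => /eqP.
(* D contains the points (a2 : 0 : -a0 : 0) and (a3 : 0 : 0 : -a0) of the line
   l_b = 0, hence also (a2 a3 : 0 : a0 a3 : -2 a0 a2), where F = -2 (a0 a2 a3)^2. *)
have bp : b 0 * a 2 + b 2 * - a 0 + b 3 * 0 = 0.
  by apply: cube0; rewrite -Fb_pt ?mulr0 //; ring.
have bq : b 0 * a 3 + b 2 * 0 + b 3 * - a 0 = 0.
  by apply: cube0; rewrite -Fb_pt ?mulr0 //; ring.
have := Fb_pt (a 2 * a 3) (a 0 * a 3) (-2 * a 0 * a 2) ltac:(ring).
have -> : b 0 * (a 2 * a 3) + b 2 * (a 0 * a 3) + b 3 * (-2 * a 0 * a 2)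
          = - a 3 * (b 0 * a 2 + b 2 * - a 0 + b 3 * 0)
            + 2 * a 2 * (b 0 * a 3 + b 2 * 0 + b 3 * - a 0) by ring.
rewrite bp bq !mulr0 addr0 expr0n /= => /eqP.
have -> : a 2 * a 3 * (a 0 * a 3) * (-2 * a 0 * a 2) = - (2 * (a 0 * a 2 * a 3) ^+ 2).
  by ring.
by rewrite oppr_eq0 mulf_eq0 pnatr_eq0 sqrf_eq0 => /eqP.
Qed.

(* The gradient of F at q is c a, so (q0 q2 q3)^2 = (q2 q3) (q0 q3) (q0 q2) = c^3 a0 a2 a3. *)
Lemma SingD_coord1 a q : SingD a q -> a 0 * a 2 * a 3 = 0 -> q 1 = 0.
Proof.
case=> -[_ [Fq _]] [c gradq] a023; have [d0 _ d2 d3] := gradF_eval q.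
have : (q 0 * q 2 * q 3) ^+ 2 = c ^+ 3 * (a 0 * a 2 * a 3).
  transitivity (c * a 0 * (c * a 2) * (c * a 3)); last by ring.
  by rewrite -!gradq d0 d2 d3; ring.
move: Fq; rewrite Fcub_eval a023 mulr0 => /eqP; rewrite subr_eq0 => /eqP ->.
by move/eqP; rewrite -exprM expf_eq0 => /eqP.
Qed.

(* With q1 = 0 and a1 <> 0, the tangent cone at q read through plane_pt is a
   quadratic form without square terms, which is a square only if it vanishes. *)
Lemma cusp_coord1 a q : cusp a q -> a 0 * a 2 * a 3 = 0 -> a 1 = 0.
Proof.
case=> qD [[m tangent_cone] _] a023; have q1 := SingD_coord1 qD a023.
case: qD => -[[l ql] _] _; apply/eqP; apply: contraNT ql => a1_nz.
pose mu i := a 1 * m i - a i * m 1.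
have [] : [/\ 2 * a 1 ^+ 2 * q 3 = 0, 2 * a 1 ^+ 2 * q 2 = 0 & 2 * a 1 ^+ 2 * q 0 = 0].
  apply: (@square_offdiag_eq0 _ _ _ _ (mu 0) (mu 2) (mu 3)) => s0 s2 s3.
  have := tangent_cone _ (lin_plane_pt a s0 s2 s3).
  rewrite hessq_eval sum4 /plane_pt /pt4 /= q1 /mu => E.
  by apply: etrans (etrans E _); ring.
have a1_unit : 2 * a 1 ^+ 2 != 0 by rewrite mulf_neq0 ?pnatr_eq0 ?expf_neq0.
have cancel r : 2 * a 1 ^+ 2 * r = 0 -> r = 0.
  by move/eqP; rewrite mulf_eq0 (negbTE a1_unit) => /eqP.
move=> /cancel q3 /cancel q2 /cancel q0.
by case: (ord4P l) => ->; rewrite ?q0 ?q1 ?q2 ?q3.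
Qed.

Lemma is_HstarE a : nonzero a -> is_Hstar a <-> on_x1_axis a.
Proof.
move=> a_nz; split=> [[c [_ aE]]|[a0 a2 a3]]; first by split; rewrite aE /= mulr0.
exists (a 1); split.
  case: a_nz => i; apply: contraNneq => a1.
  by case: (ord4P i) => ->; rewrite ?a0 ?a1 ?a2 ?a3.
by move=> i; case: (ord4P i) => -> /=; rewrite ?a0 ?a2 ?a3 ?mulr0 ?mulr1.
Qed.

Lemma cusp_or_triple_lineE a : nonzero a ->
  a 1 = 0 /\ a 0 * a 2 * a 3 = 0 <->
  (cuspidal_cubic a /\ exists p, SingD a p /\ SingS p) \/ triple_line a.
Proof.
move=> a_nz; split=> [[a1 a023]|]; last first.
  case=> [[[_ [q q_cusp]] [p [[[_ [_ ap]] _] pS]]] | a_triple].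
    have a023 : a 0 * a 2 * a 3 = 0 by apply/meets_SingSE; exists p.
    by split=> //; apply: cusp_coord1 q_cusp a023.
  by have a1 := triple_line_coord1 a_triple; split=> //; apply: triple_line_prod023.
have [a0|a0] := eqVneq (a 0) 0; have [a2|a2] := eqVneq (a 2) 0;
  have [a3|a3] := eqVneq (a 3) 0.
- by case: a_nz => i; case: (ord4P i) => ->; rewrite ?a0 ?a1 ?a2 ?a3 eqxx.
- by right; apply: (triple_line_vertex Perm023 a0 a1 a3 a2).
- by right; apply: (triple_line_vertex Perm302 a3 a1 a2 a0).
- by left; apply: (cuspidal_vertex Perm023 a0 a1 a3 a2).
- by right; apply: (triple_line_vertex Perm230 a2 a1 a0 a3).
- by left; apply: (cuspidal_vertex Perm203 a2 a1 a3 a0).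
- by left; apply: (cuspidal_vertex Perm302 a3 a1 a2 a0).
- by move: (mulf_neq0 (mulf_neq0 a0 a2) a3); rewrite a023 eqxx.
Qed.

End CubicSurface.

Theorem corollary4p13 (R : realType) (a : 'I_4 -> R[i]) :
  nonzero a ->
  [/\ stable a <-> ~ meets_SingS a,
      (polystable a /\ ~ stable a) <-> is_Hstar a
    & unstable a <->
      ((cuspidal_cubic a /\ exists p, SingD a p /\ SingS p) \/ triple_line a)].
Proof.
move=> a_nz; split.
- by rewrite stableE // meets_SingSE; split=> /eqP.
- rewrite is_HstarE // polystableE // stableE //; split.
    by case=> [[a023 /(_ a023)|]].
  by move=> a_axis; split; [right | move/eqP; rewrite on_x1_axis_prod].
- by rewrite unstableE cusp_or_triple_lineE.
Qed.
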